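(* Let $P$ be a multiprogram in which at most one thread per process calls deliver, and let $\widehat C$ be a finite computation of $\mathrm{TS}(P)$ satisfying $\mathrm{NW}$. Let $m_1,m_2$ be ORD messages carrying labels $g$ and $h$ with $h\neq\bot$ and queue elements $qe_1,qe_2$ respectively, with $qe_1.ts\le qe_2.ts$. Then for every process $\widehat p$ that performs an extractmin on $\mathrm{priorityQ}[h]$ returning $qe_2$, the enqueue by $\widehat p$ of $qe_1$ (into $\mathrm{priorityQ}[g]$ if $g\ne\bot$, or into the appropriate FIFO queue if $g=\bot$) precedes that extractmin in $\widehat p$'s program order.
   Context: $\mathrm{NW}$ (message-passing network model): processes communicate by $\mathrm{send}(s,d,m)$/$\mathrm{recv}(s,d,m)$ of uniquely identified messages; messages from a given sender to a given receiver are received in the order sent (FIFO channels), each message is received at most once and only after being sent; threads within a process share local variables whose accesses are sequentially consistent. Formally $\mathrm{NW}(C)$ holds iff for each process there is a valid total order of its operations extending $\to_{\mathrm{HappensBefore}}$, the transitive closure of program order, send-before-receive, FIFO-channel order, and writes-into order on local variables; and messages are received iff sent. The timestamp transformation $\mathrm{TS}$. Each process $\widehat p$ has: integer local-counter (initially 0); arrays $\mathrm{counter}[\cdot]$ and $T[\cdot]$ indexed by processes, initially 0; a priority queue $\mathrm{priorityQ}[l]$ for each label $l\in L$ ordered by (timestamp, source) lexicographically; a FIFO queue $\mathrm{fifoQ}[\widehat q]$ for each process $\widehat q$. Queue elements are $[u,ts,c,src]$. $\mathrm{bcast}(u,l)$ ($l\in L\cup\{\bot\}$): send $[\mathrm{LBR},u,l]$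 to $\widehat p$ itself. ProcessQueueElement$(qe,l,s)$: enqueue $qe$ into $\mathrm{priorityQ}[l]$ if $l\neq\bot$, else into $\mathrm{fifoQ}[s]$. HandleMessage: receive a message from some $\widehat s$; if $[\mathrm{LBR},u,l]$: $T[\widehat p]\gets T[\widehat p]+1$, local-counter $\gets$ local-counter$+1$, $qe\gets[u,T[\widehat p],\text{local-counter},\widehat p]$, ProcessQueueElement$(qe,l,\widehat p)$, send $[\mathrm{ORD},l,qe]$ to every other process; if $[\mathrm{TSUPD},t,\widehat q]$: $T[\widehat q]\gets t$; if $[\mathrm{ORD},l,qe]$: $T[\widehat s]\gets qe.ts$, ProcessQueueElement$(qe,l,\widehat s)$, and if $qe.ts>T[\widehat p]$ then $T[\widehat p]\gets qe.ts$ and send $[\mathrm{TSUPD},T[\widehat p],\widehat p]$ to every other process. CanExtract$(\mathrm{priorityQ}[l])$ holds iff the queue is nonempty and its minimum $qe$ satisfies $qe.c=\mathrm{counter}[qe.src]+1$ and $qe.ts\le T[\widehat q]$ for all $\widehat q$. CanDequeue$(\mathrm{fifoQ}[\widehat q])$ holds iff nonempty and its head $qe$ satisfies $qe.c=\mathrm{counter}[qe.src]+1$. deliver: while no priority queue satisfies CanExtract and no FIFO queue satisfies CanDequeue, call HandleMessage; then remove an element $qe$ from such a queue (extractmin, or FIFO dequeue), set $\mathrm{counter}[qe.src]\gets qe.c$, and return $qe.u$ with its label ($\bot$ for FIFO). Reads/writes of the original program are mapped to themselves. A queue element $qe$ sent in an ORD message is the element created by its source $qe.src$ when handling an LBR message.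 *)

From mathcomp Require Import all_boot.
From Stdlib Require Import List.
Import ListNotations.

Set Implicit Arguments.
Unset Strict Implicit.
Unset Printing Implicit Defensive.

(* Operational model of a computation of TS(P) in the NW model, where at most
   one thread per process (the "deliver thread") calls deliver.  Processes are
   'I_n (their order is the nat order, used for tie breaking by source);
   U = payload type; L = label type; labels in L \cup {bot} are [option L]
   (None = bot).  Channels are FIFO: chan s d is the sequence of messages sent
   by s to d and not yet received, oldest first. *)

Section TS.
Variables (U : Type) (L : eqType) (n : nat).

Record qelem := QE { qu : U; qts : nat; qc : nat; qsrc : 'I_n }.

Inductive msg :=
| MLBR (u : U) (l : option L)
| MTSUPD (t : nat) (q : 'I_n)
| MORD (l : option L) (qe : qelem).

Record lstate := LState {
  lc : nat;
  ctr : 'I_n -> nat;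
  Ts : 'I_n -> nat;
  pq : L -> list qelem;   (* priority queue as a multiset *)
  fq : 'I_n -> list qelem (* FIFO queue, head first *)
}.

Record gstate := GState {
  loc : 'I_n -> lstate;
  chan : 'I_n -> 'I_n -> list msg
}.

Definition upd {A : eqType} {B : Type} (f : A -> B) (x : A) (v : B) : A -> B :=
  fun y => if y == x then v else f y.

Definition send (s d : 'I_n) (m : msg) (ch : 'I_n -> 'I_n -> list msg) :=
  fun a b => if (a == s) && (b == d) then ch a b ++ [m] else ch a b.

Definition send_others (s : 'I_n) (m : msg) (ch : 'I_n -> 'I_n -> list msg) :=
  fun a b => if (a == s) && (b != s) then ch a b ++ [m] else ch a b.

Definition pop (s d : 'I_n) (ch : 'I_n -> 'I_n -> list msg) :=
  fun a b => if (a == s) && (b == d) then List.tl (ch a b) else ch a b.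

Definition set_lc (ls : lstate) c := LState c (ctr ls) (Ts ls) (pq ls) (fq ls).
Definition set_ctr (ls : lstate) f := LState (lc ls) f (Ts ls) (pq ls) (fq ls).
Definition set_Ts (ls : lstate) f := LState (lc ls) (ctr ls) f (pq ls) (fq ls).
Definition set_pq (ls : lstate) f := LState (lc ls) (ctr ls) (Ts ls) f (fq ls).
Definition set_fq (ls : lstate) f := LState (lc ls) (ctr ls) (Ts ls) (pq ls) f.

Definition enqueue (ls : lstate) (l : option L) (s : 'I_n) (qe : qelem) :=
  match l with
  | Some l' => set_pq ls (upd (pq ls) l' (qe :: pq ls l'))
  | None => set_fq ls (upd (fq ls) s (fq ls s ++ [qe]))
  end.

Definition lex_lt (a b : qelem) : Prop :=
  qts a < qts b \/ (qts a = qts b /\ (nat_of_ord (qsrc a) < nat_of_ord (qsrc b))%N).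

Definition is_min (qe : qelem) (q : list qelem) : Prop :=
  In qe q /\ forall x, In x q -> ~ lex_lt x qe.

Definition CanExtract (ls : lstate) (l : L) (qe : qelem) : Prop :=
  is_min qe (pq ls l) /\ qc qe = ctr ls (qsrc qe) + 1 /\
  forall q, qts qe <= Ts ls q.

Definition CanDequeue (ls : lstate) (q : 'I_n) (qe : qelem) : Prop :=
  (exists rest, fq ls q = qe :: rest) /\ qc qe = ctr ls (qsrc qe) + 1.

Definition some_ready (ls : lstate) : Prop :=
  (exists l qe, CanExtract ls l qe) \/ (exists q qe, CanDequeue ls q qe).

(* EBcast is a bcast call (by any thread);
   ELBR/ETSUPD/EORD are the HandleMessage calls of the deliver thread of p
   (ELBR and EORD record the element they enqueue); EExtract / EDequeue are
   the final extraction step of a deliver call. *)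
Inductive event :=
| EBcast (p : 'I_n) (u : U) (l : option L)
| ELBR (p : 'I_n) (u : U) (l : option L) (qe : qelem)
| ETSUPD (p s : 'I_n) (t : nat) (q : 'I_n)
| EORD (p s : 'I_n) (l : option L) (qe : qelem)
| EExtract (p : 'I_n) (l : L) (qe : qelem)
| EDequeue (p q : 'I_n) (qe : qelem).

Definition step (st : gstate) (ev : event) (st' : gstate) : Prop :=
  match ev with
  | EBcast p u l =>
      st' = GState (loc st) (send p p (MLBR u l) (chan st))
  | ELBR p u l qe =>
      let ls := loc st p in
      ~ some_ready ls /\
      (exists rest, chan st p p = MLBR u l :: rest) /\
      let t := Ts ls p + 1 in
      let c := lc ls + 1 in
      qe = QE u t c p /\
      st' = GState
              (upd (loc st) p (enqueue (set_Ts (set_lc ls c) (upd (Ts ls) p t)) l p qe))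
              (send_others p (MORD l qe) (pop p p (chan st)))
  | ETSUPD p s t q =>
      let ls := loc st p in
      ~ some_ready ls /\
      (exists rest, chan st s p = MTSUPD t q :: rest) /\
      st' = GState (upd (loc st) p (set_Ts ls (upd (Ts ls) q t))) (pop s p (chan st))
  | EORD p s l qe =>
      let ls := loc st p in
      ~ some_ready ls /\
      (exists rest, chan st s p = MORD l qe :: rest) /\
      let ls2 := enqueue (set_Ts ls (upd (Ts ls) s (qts qe))) l s qe in
      (if Ts ls2 p < qts qe then
         st' = GState (upd (loc st) p (set_Ts ls2 (upd (Ts ls2) p (qts qe))))
                      (send_others p (MTSUPD (qts qe) p) (pop s p (chan st)))
       else
         st' = GState (upd (loc st) p ls2) (pop s p (chan st)))
  | EExtract p l qe =>
      let ls := loc st p in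
      CanExtract ls l qe /\
      exists q1 q2, pq ls l = q1 ++ qe :: q2 /\
        st' = GState (upd (loc st) p
                 (set_ctr (set_pq ls (upd (pq ls) l (q1 ++ q2)))
                          (upd (ctr ls) (qsrc qe) (qc qe))))
                 (chan st)
  | EDequeue p q qe =>
      let ls := loc st p in
      CanDequeue ls q qe /\
      exists rest, fq ls q = qe :: rest /\
        st' = GState (upd (loc st) p
                 (set_ctr (set_fq ls (upd (fq ls) q rest))
                          (upd (ctr ls) (qsrc qe) (qc qe))))
                 (chan st)
  end.

Definition init_lstate : lstate :=
  LState 0 (fun _ => 0) (fun _ => 0) (fun _ => []) (fun _ => []).

Definition init_state : gstate :=
  GState (fun _ => init_lstate) (fun _ _ => []).

(* a finite computation of length k: states st 0 .. st k, events ev 0 .. ev (k-1) *)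
Definition computation (st : nat -> gstate) (ev : nat -> event) (k : nat) : Prop :=
  st 0 = init_state /\ forall i, i < k -> step (st i) (ev i) (st (S i)).

(* "every message is received iff it is sent": no message is left in transit *)
Definition all_received (g : gstate) : Prop :=
  forall s d, chan g s d = [].

Definition sent (st : nat -> gstate) (k : nat) (s d : 'I_n) (m : msg) : Prop :=
  exists i, i <= k /\ In m (chan (st i) s d).

Definition enqueue_of (ev : event) : option ('I_n * option L * qelem) :=
  match ev with
  | ELBR p _ l qe => Some (p, l, qe)
  | EORD p _ l qe => Some (p, l, qe)
  | _ => None
  end.

End TS.

(* Let s be the source of qe1, which created it by handling an LBR message at
   some step c, so that qts qe1 = T_s[s] + 1 at that step.  At the extraction
   of qe2, CanExtract gives qts qe1 <= qts qe2 <= T_p[s].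
   - If p = s, the clock T_s[s] never decreases, so the extraction comes after
     step c, which is the enqueue of qe1 by s.
   - If p <> s, FIFO channels make T_p[s] a lower bound on what p has received
     from s.  Before step c, neither T_p[s] nor any message on the channel
     s -> p reaches qts qe1 (everything s sends carries a timestamp at most
     T_s[s]).  After step c, until p receives the ORD message for qe1, that
     message sits on the channel behind messages with smaller timestamps, and
     T_p[s] stays below qts qe1.  Hence T_p[s] >= qts qe1 forces p to have
     handled the ORD message, i.e. enqueued qe1, before the extraction. *)

From mathcomp Require Import all_boot zify.
From Stdlib Require Import List.
Import ListNotations.

Section Model.
Context {U : Type} {L : eqType} {n : nat}.

Implicit Types (st : gstate U L n) (ev : event U L n) (m : msg U L n).

Definition msg_ts m : nat :=
  match m with MLBR _ _ => 0 | MTSUPD t _ => t | MORD _ qe => qts qe end.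

Definition msg_shape (s d : 'I_n) m : Prop :=
  match m with
  | MLBR _ _ => True
  | MTSUPD _ q => q = s /\ s <> d
  | MORD _ _ => s <> d
  end.

Definition well_formed st : Prop :=
  forall s d m, In m (chan st s d) -> msg_shape s d m.

Definition consumes ev (b a : 'I_n) m : Prop :=
  match m with
  | MLBR u l => a = b /\ exists qe, ev = ELBR b u l qe
  | MTSUPD t q => ev = @ETSUPD U L n b a t q
  | MORD l qe => ev = EORD b a l qe
  end.

Lemma Ts_enqueue (ls : lstate U L n) l s qe : Ts (enqueue ls l s qe) = Ts ls.
Proof. by case: l. Qed.

Lemma chan_step {st ev st'} a b : step st ev st' ->
  chan st' a b = chan st a b
  \/ (exists m, chan st a b = m :: chan st' a b /\ consumes ev b a m)
  \/ (exists m, chan st' a b = chan st a b ++ [m] /\ msg_shape a b m /\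
        msg_ts m <= Ts (loc st' a) a /\
        (forall l qe, m = MORD l qe -> exists u, ev = ELBR a u l qe)).
Proof.
case: ev => [p u l | p u l qe | p s t q | p s l qe | p l qe | p q qe] /=.
- move=> ->; rewrite /send /=.
  case: ifP => [/andP[/eqP-> /eqP->] | _]; last by left.
  by right; right; exists (@MLBR U L n u l).
- move=> [_ [[rest Hr] [Hqe ->]]] /=; rewrite /send_others /pop.
  case: (eqVneq a p) => [->|_]; last by left.
  case: (eqVneq b p) => [->|nbp] /=.
    by rewrite Hr; right; left; exists (@MLBR U L n u l); split=> //; split=> //; exists qe.
  right; right; exists (MORD l qe); split=> //; split; first by move=> E; rewrite E eqxx in nbp.
  split; last by move=> l' qe' [<- <-]; exists u.
  by rewrite /upd eqxx Ts_enqueue /= eqxx Hqe.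
- move=> [_ [[rest Hr] ->]] /=; rewrite /pop.
  case: ifP => [/andP[/eqP-> /eqP->] | _]; last by left.
  by rewrite Hr; right; left; exists (@MTSUPD U L n t q).
- move=> [_ [[rest Hr] Hif]]; move: Hif; case: ifP => _ -> /=; rewrite ?/send_others /pop.
    case: (eqVneq a p) => [->|_]; last first.
      case: ifP => [/andP[/eqP-> /eqP->] | _]; last by left.
      by rewrite Hr; right; left; exists (MORD l qe).
    case: (eqVneq b p) => [->|nbp] /=.
      rewrite andbT; case: eqP => [Eps|_]; last by left.
      by subst s; rewrite Hr; right; left; exists (MORD l qe).
    right; right; exists (@MTSUPD U L n (qts qe) p); rewrite andbF; split=> //.
    split; first by split=> // E; rewrite E eqxx in nbp.
    by split=> //; rewrite /upd eqxx /= eqxx.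
  case: ifP => [/andP[/eqP-> /eqP->] | _]; last by left.
  by rewrite Hr; right; left; exists (MORD l qe).
- by move=> [_ [q1 [q2 [_ ->]]]]; left.
- by move=> [_ [rest [_ ->]]]; left.
Qed.

Lemma Ts_step {st ev st'} x y : step st ev st' -> well_formed st ->
  Ts (loc st' x) y = Ts (loc st x) y
  \/ (x = y /\ Ts (loc st x) x < Ts (loc st' x) x)
  \/ (x <> y /\ exists m, chan st y x = m :: chan st' y x /\
                          Ts (loc st' x) y = msg_ts m).
Proof.
case: ev => [p u l | p u l qe | p s t q | p s l qe | p l qe | p q qe] /=.
- by move=> -> _; left.
- move=> [_ [_ [_ ->]]] _ /=; rewrite /upd.
  case: (eqVneq x p) => [->|_]; last by left.
  rewrite ?eqxx Ts_enqueue /=; case: (eqVneq y p) => [->|nyp].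
    by right; left; split=> //; rewrite ?eqxx; lia.
  by left; rewrite ?(negbTE nyp).
- move=> [_ [[rest Hr] ->]] Hwf /=.
  have [-> nsp] : q = s /\ s <> p by apply: (Hwf s p (@MTSUPD U L n t q)); rewrite Hr; left.
  rewrite /upd; case: (eqVneq x p) => [->|_]; last by left.
  rewrite ?eqxx /=; case: (eqVneq y s) => [->|nys]; last by left.
  right; right; split; first by move=> E; apply: nsp; rewrite E.
  by exists (@MTSUPD U L n t q); rewrite /pop !eqxx Hr.
- move=> [_ [[rest Hr] Hif]] Hwf.
  have nsp : s <> p by apply: (Hwf s p (MORD l qe)); rewrite Hr; left.
  have Hpop : forall ch : 'I_n -> 'I_n -> list (msg U L n),
      send_others p (@MTSUPD U L n (qts qe) p) (pop s p ch) s p = pop s p ch s p.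
    by move=> ch; rewrite /send_others eqxx andbF.
  move: Hif; case: ifP => Hc -> /=; rewrite /upd;
    (case: (eqVneq x p) => [->|_]; last by left); rewrite ?eqxx /= Ts_enqueue /=.
  + case: (eqVneq y s) => [->|nys].
      right; right; split; first by move=> E; apply: nsp; rewrite E.
      by exists (@MORD U L n l qe); rewrite Hpop /pop !eqxx Hr if_same.
    case: (eqVneq y p) => [->|nyp]; last by left; rewrite ?(negbTE nyp).
    by right; left; split=> //; move: Hc; rewrite Ts_enqueue /= /upd (introF eqP (nesym nsp)) eqxx.
  + case: (eqVneq y s) => [->|nys]; last by left; rewrite ?(negbTE nys).
    right; right; split; first by move=> E; apply: nsp; rewrite E.
    by exists (@MORD U L n l qe); rewrite /pop !eqxx Hr.
- move=> [_ [q1 [q2 [_ ->]]]] _ /=; rewrite /upd.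
  by case: (eqVneq x p) => [->|_]; left.
- move=> [_ [rest [_ ->]]] _ /=; rewrite /upd.
  by case: (eqVneq x p) => [->|_]; left.
Qed.

Lemma lbr_timestamp {st st' s u l qe} : step st (ELBR s u l qe) st' ->
  qts qe = Ts (loc st s) s + 1.
Proof. by move=> [_ [_ [-> _]]]. Qed.

Lemma lbr_chan {st st' s p u l qe} : step st (ELBR s u l qe) st' -> s <> p ->
  chan st' s p = chan st s p ++ [MORD l qe].
Proof.
move=> [_ [_ [_ ->]]] nsp /=.
have nps : (p == s) = false by apply/negbTE/eqP => E; apply: nsp; rewrite E.
by rewrite /send_others /pop eqxx nps.
Qed.

Lemma extract_bound {st st' p h qe} : step st (EExtract p h qe) st' ->
  forall q, qts qe <= Ts (loc st p) q.
Proof. by move=> [[_ [_ Hge]] _]. Qed.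

Definition unseen st (s p : 'I_n) (t : nat) : Prop :=
  Ts (loc st p) s < t /\ forall m, In m (chan st s p) -> msg_ts m < t.

Definition pending st (s p : 'I_n) m (t : nat) : Prop :=
  Ts (loc st p) s < t /\
  exists pre post, chan st s p = pre ++ m :: post /\
                   forall x, In x pre -> msg_ts x < t.

(* T_p[s] only takes values received from s, so it stays below t while p
   has not seen t. *)
Lemma peer_clock_step {st ev st' s p t} : step st ev st' -> well_formed st ->
  s <> p -> unseen st s p t -> Ts (loc st' p) s < t.
Proof.
move=> Hs Hwf nsp [HT Hch].
case: (Ts_step p s Hs Hwf) => [-> // | [[E _] | [_ [m [Hm ->]]]]].
- by case: nsp.
- by apply: Hch; rewrite Hm; left.
Qed.

(* Everything s sends carries at most its own clock, so p keeps not having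
   seen t as long as that clock stays below t. *)
Lemma unseen_step {st ev st' s p t} : step st ev st' -> well_formed st ->
  s <> p -> unseen st s p t -> Ts (loc st' s) s < t -> unseen st' s p t.
Proof.
move=> Hs Hwf nsp Hun Hown; split; first exact: peer_clock_step Hs Hwf nsp Hun.
have [_ Hch] := Hun; move=> m.
case: (chan_step s p Hs) => [-> | [[m0 [E _]] | [m0 [-> [_ [Hts _]]]]]].
- exact: Hch.
- by move=> Hin; apply: Hch; rewrite E; right.
- move=> /in_app_iff [/Hch // | [<- | []]]; exact: leq_ltn_trans Hts Hown.
Qed.

Lemma lbr_pending {st st' s p u l qe} : step st (ELBR s u l qe) st' ->
  well_formed st -> s <> p -> unseen st s p (qts qe) ->
  pending st' s p (MORD l qe) (qts qe).
Proof.
move=> Hs Hwf nsp Hun; split; first exact: peer_clock_step Hs Hwf nsp Hun.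
exists (chan st s p), [::]; split; first exact: lbr_chan Hs nsp.
by case: Hun.
Qed.

Lemma pending_step {st ev st' s p m t} : step st ev st' -> well_formed st ->
  s <> p -> pending st s p m t -> pending st' s p m t \/ consumes ev p s m.
Proof.
move=> Hs Hwf nsp [HT [pre [post [Ech Hpre]]]].
have Tstep := Ts_step p s Hs Hwf.
case: (chan_step s p Hs) => [E | [[m0 [E Hcons]] | [m0 [E _]]]].
- left; split; last by exists pre, post; rewrite E.
  case: Tstep => [-> // | [[E' _] | [_ [m' [Hm _]]]]]; first by case: nsp.
  by move: Hm; rewrite E => /(f_equal (@length _)) /=; lia.
- case: pre Ech Hpre => [|x pre] Ech Hpre.
    by right; move: E; rewrite Ech /= => -[->].
  left; move: E; rewrite Ech => -[Ex Erest]; split.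
    case: Tstep => [-> // | [[E' _] | [_ [m' [Hm ->]]]]]; first by case: nsp.
    by move: Hm; rewrite Ech Ex => -[<- _]; apply: Hpre; left.
  by exists pre, post; split=> // y Hy; apply: Hpre; right.
- left; split.
    case: Tstep => [-> // | [[E' _] | [_ [m' [Hm _]]]]]; first by case: nsp.
    by move: Hm; rewrite E => /(f_equal (@length _)); rewrite /= length_app /=; lia.
  by exists pre, (post ++ [m0]); rewrite E Ech -app_assoc.
Qed.

Section Computation.
Context {st : nat -> gstate U L n} {ev : nat -> event U L n} {k : nat}.
Hypothesis Hinit : st 0 = init_state U L n.
Hypothesis Hstep : forall i, i < k -> step (st i) (ev i) (st i.+1).

Lemma reachable_well_formed {i} : i <= k -> well_formed (st i).
Proof.
elim: i => [_ | i IH Hi]; first by rewrite Hinit => s d m [].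
move=> s d m; have Hwf := IH (ltnW Hi).
case: (chan_step s d (Hstep _ Hi)) => [-> | [[m0 [E _]] | [m0 [-> [Hsh _]]]]].
- exact: Hwf.
- by move=> Hin; apply: Hwf; rewrite E; right.
- by move=> /in_app_iff [/Hwf // | [<- | []]].
Qed.

Lemma ord_origin {i s d l qe} : i <= k -> In (MORD l qe) (chan (st i) s d) ->
  exists c u, c < i /\ ev c = ELBR s u l qe.
Proof.
elim: i => [_ | i IH Hi]; first by rewrite Hinit.
have IH' : In (MORD l qe) (chan (st i) s d) -> exists c u, c < i.+1 /\ ev c = ELBR s u l qe.
  by move=> /(IH (ltnW Hi)) [c [u [Hc Hev]]]; exists c, u; split=> //; lia.
case: (chan_step s d (Hstep _ Hi)) => [-> // | [[m0 [E _]] | [m0 [-> [_ [_ Hlbr]]]]]].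
- by move=> Hin; apply: IH'; rewrite E; right.
- move=> /in_app_iff [// | [Em | []]].
  by have [u Hu] := Hlbr l qe Em; exists i, u.
Qed.

Lemma own_clock_mono x {i i'} : i <= i' -> i' <= k ->
  Ts (loc (st i) x) x <= Ts (loc (st i') x) x.
Proof.
elim: i' => [| i' IH] Hii' Hk; first by have -> : i = 0 by lia.
case: (eqVneq i i'.+1) => [-> // | Hne].
apply: leq_trans (IH _ (ltnW Hk)) _; first by lia.
case: (Ts_step x x (Hstep _ Hk) (reachable_well_formed (ltnW Hk))) => [-> // | [[_ H] | [H _]]].
- exact: ltnW.
- by case: H.
Qed.

Context {c : nat} {s p : 'I_n} {u : U} {l : option L} {qe : qelem U n}.
Hypothesis Hck : c < k.
Hypothesis Hevc : ev c = ELBR s u l qe.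
Hypothesis nsp : s <> p.

Lemma unseen_before_bcast {i} : i <= c -> unseen (st i) s p (qts qe).
Proof.
have Hts : qts qe = Ts (loc (st c) s) s + 1.
  by have := Hstep _ Hck; rewrite Hevc => /lbr_timestamp.
elim: i => [_ | i IH Hi].
  by rewrite Hinit Hts; split=> [| m []] /=; lia.
have Hik : i < k by lia.
apply: (unseen_step (Hstep _ Hik) (reachable_well_formed (ltnW Hik)) nsp (IH (ltnW Hi))).
by have := own_clock_mono s Hi (ltnW Hck); lia.
Qed.

Lemma delivered_or_pending {i} : c < i -> i <= k ->
  (exists i', i' < i /\ ev i' = EORD p s l qe) \/
  pending (st i) s p (MORD l qe) (qts qe).
Proof.
elim: i => [// | i IH Hci Hi].
have Hwf := reachable_well_formed (ltnW Hi).
case: (eqVneq i c) => [Eic | Hne].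
  subst i; have := Hstep _ Hi; rewrite Hevc => /lbr_pending Hpend.
  by right; apply: Hpend Hwf nsp (unseen_before_bcast (leqnn c)).
have Hci' : c < i by lia.
case: (IH Hci' (ltnW Hi)) => [[i' [Hi' Hev]] | Hpend].
  by left; exists i'; split=> //; lia.
case: (pending_step (Hstep _ Hi) Hwf nsp Hpend) => [Hpend' | Hcons]; first by right.
by left; exists i.
Qed.

Lemma ord_handled_before {j} : j <= k -> qts qe <= Ts (loc (st j) p) s ->
  exists i, i < j /\ ev i = EORD p s l qe.
Proof.
move=> Hj Hge; case: (ltnP c j) => Hcj.
  case: (delivered_or_pending Hcj Hj) => [// | [Hlt _]]; lia.
by have [Hlt _] := unseen_before_bcast Hcj; lia.
Qed.

End Computation.
End Model.

Theorem mainTheorem6 (U : Type) (L : eqType) (n : nat)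
    (st : nat -> gstate U L n) (ev : nat -> event U L n) (k : nat)
    (Hcomp : computation st ev k)
    (Hnw : all_received (st k))
    (g : option L) (h : L) (qe1 qe2 : qelem U n) (s1 d1 s2 d2 : 'I_n)
    (Hm1 : sent st k s1 d1 (MORD g qe1))
    (Hm2 : sent st k s2 d2 (MORD (Some h) qe2))
    (Hts : qts qe1 <= qts qe2)
    (p : 'I_n) (j : nat) (Hj : j < k)
    (Hext : ev j = EExtract p h qe2) :
  exists i, i < j /\ enqueue_of (ev i) = Some (p, g, qe1).
Proof.
case: Hcomp => Hinit Hstep.
case: Hm1 => i1 [Hi1 Hin1].
have [c [u [Hc Hevc]]] := ord_origin Hinit Hstep Hi1 Hin1.
have Hck : c < k by lia.
have Hts1 : qts qe1 = Ts (loc (st c) s1) s1 + 1.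
  by have := Hstep _ Hck; rewrite Hevc => /lbr_timestamp.
(* at the extraction, CanExtract gives qts qe1 <= T_p[s1] *)
have Hge : qts qe1 <= Ts (loc (st j) p) s1.
  by have := Hstep _ Hj; rewrite Hext => /extract_bound /(_ s1) /(leq_trans Hts).
case: (eqVneq p s1) => [Eps | /eqP nps].
- (* p is the creator: its clock shows that the extraction follows step c *)
  subst p; exists c; rewrite Hevc; split=> //.
  rewrite ltnNge; apply/negP => Hjc.
  by have := own_clock_mono Hinit Hstep s1 Hjc (ltnW Hck); lia.
-
  have nsp : s1 <> p by move=> E; apply: nps.
  have [i [Hi Hev]] := ord_handled_before Hinit Hstep Hck Hevc nsp (ltnW Hj) Hge.
  by exists i; rewrite Hev.
Qed.
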